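(* Let $n\ge 1$, let $\rho>0$ and let $d_1,\dots,d_n>0$. Let $W=(w_{ij})$ be the $n\times n$ matrix with $w_{ij}=1/d_{\min(i,j)}$, let $\mathbf 1\in\mathbb R^n$ be the column vector of ones, and set $M=W-\frac{1}{\rho}\mathbf 1\mathbf 1^T$. If $d_1\le d_2\le\cdots\le d_n$ and $d_1>\rho$, then $M$ is negative semidefinite.
   Context: Interpretation: $d_i$ is the density of the cargo placed in the $i$-th position from the bottom of a vessel and $\rho$ is the water density; the hypothesis says every cargo lies above cargoes of lower (or equal) density and the lowest cargo is heavier than water. *)

From mathcomp Require Import all_boot all_order all_algebra.
Set Implicit Arguments. Unset Strict Implicit. Unset Printing Implicit Defensive.
Import Order.TTheory GRing.Theory Num.Theory.
Local Open Scope ring_scope.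

Definition neg_semidef (R : realFieldType) (n : nat) (M : 'M[R]_n) : Prop :=
  forall x : 'cV[R]_n, (x^T *m M *m x) 0 0 <= 0.

Definition Wmx (R : realFieldType) (n : nat) (d : 'I_n -> R) : 'M[R]_n :=
  \matrix_(i, j) (d (if (i <= j)%N then i else j))^-1.

Definition ones (R : realFieldType) (n : nat) : 'cV[R]_n := const_mx 1.

(* Write e_i = 1/d_i, which is nonincreasing.  Peeling off the first index shows
   that the tail forms Q_k = sum_{i,j >= k} x_i x_j e_{min(i,j)} and the tail sums
   S_k = sum_{i >= k} x_i satisfy Q_k = e_k (S_k^2 - S_{k+1}^2) + Q_{k+1}, so by
   descending induction Q_k <= e_k S_k^2.  Hence x^T W x = Q_1 <= e_1 S_1^2 <= S_1^2 / rho
   = x^T (1 1^T / rho) x. *)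

From mathcomp Require Import all_boot all_order all_algebra.
From mathcomp Require Import ring lra zify.
Set Implicit Arguments. Unset Strict Implicit. Unset Printing Implicit Defensive.
Import Order.TTheory GRing.Theory Num.Theory.
Local Open Scope ring_scope.

Section MinKernel.

Variables (R : realFieldType) (n : nat) (x e : nat -> R).

Definition min_kernel_qform (k : nat) : R :=
  \sum_(k <= i < n) \sum_(k <= j < n) x i * x j * e (minn i j).

Lemma min_kernel_qform_recl k : (k < n)%N ->
  min_kernel_qform k = x k * x k * e k
    + 2 * (x k * e k * \sum_(k.+1 <= i < n) x i) + min_kernel_qform k.+1.
Proof.
move=> lt_kn; set S := \sum_(k.+1 <= i < n) x i.
have row_k : \sum_(k.+1 <= j < n) x k * x j * e (minn k j) = x k * e k * S.
  rewrite /S mulr_sumr; apply: eq_big_nat => j /andP [lt_kj _].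
  by rewrite (minn_idPl (ltnW lt_kj)); ring.
have rows_tail : \sum_(k.+1 <= i < n) \sum_(k <= j < n) x i * x j * e (minn i j)
    = x k * e k * S + min_kernel_qform k.+1.
  rewrite /min_kernel_qform /S mulr_sumr -big_split /=.
  apply: eq_big_nat => i /andP [lt_ki _].
  by rewrite big_ltn // (minn_idPr (ltnW lt_ki)); congr (_ + _); ring.
by rewrite {1}/min_kernel_qform big_ltn // rows_tail big_ltn // minnn row_k; ring.
Qed.

Hypothesis e_noninc : forall i, (i.+1 < n)%N -> e i.+1 <= e i.

Lemma min_kernel_qform_le k :
  min_kernel_qform k <= e k * (\sum_(k <= i < n) x i) ^+ 2.
Proof.
move Hm : (n - k)%N => m; elim: m k Hm => [|m IH] k Hm.
  have le_nk : (n <= k)%N by lia.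
  by rewrite /min_kernel_qform !big_geq // expr0n mulr0.
have lt_kn : (k < n)%N by rewrite -subn_gt0 Hm.
have := IH k.+1 ltac:(lia); set S := \sum_(k.+1 <= i < n) x i => IHk.
have e_tail : e k.+1 * S ^+ 2 <= e k * S ^+ 2.
  have [lt_k1n | le_nk1] := ltnP k.+1 n.
    by apply: ler_wpM2r; [exact: sqr_ge0 | exact: e_noninc].
  by rewrite /S big_geq // expr0n /= !mulr0.
rewrite min_kernel_qform_recl // (big_ltn lt_kn) -/S; nra.
Qed.

End MinKernel.

Lemma qform_ones (R : realFieldType) (n : nat) (x : 'cV[R]_n) :
  (x^T *m (ones R n *m (ones R n)^T) *m x) 0 0 = (\sum_i x i 0) ^+ 2.
Proof.
rewrite mulmxA -mulmxA mxE big_ord1 expr2.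
by congr (_ * _); rewrite mxE; apply: eq_bigr => i _; rewrite !mxE ?mulr1 ?mul1r.
Qed.

Lemma qform_Wmx (R : realFieldType) (n : nat) (d : 'I_n.+1 -> R)
    (x : 'cV[R]_n.+1) :
  (x^T *m Wmx d *m x) 0 0 =
  min_kernel_qform n.+1 (fun i => x (inord i) 0) (fun i => (d (inord i))^-1) 0.
Proof.
rewrite mxE /min_kernel_qform big_mkord; apply: eq_bigr => j _.
rewrite mxE mulr_suml big_mkord; apply: eq_bigr => i _.
rewrite !mxE !inord_val.
have -> : (if (i <= j)%N then i else j) = inord (minn j i).
  by apply: val_inj; rewrite /= inordK ?gtn_min ?ltn_ord //; case: leqP; lia.
by ring.
Qed.

Theorem mainTheorem4 (R : realFieldType) (n : nat) (hn : (0 < n)%N)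
  (rho : R) (d : 'I_n -> R)
  (hrho : 0 < rho) (hd : forall i, 0 < d i)
  (hmono : forall i j : 'I_n, (i <= j)%N -> d i <= d j)
  (hd1 : rho < d (Ordinal hn)) :
  neg_semidef (Wmx d - rho^-1 *: (ones R n *m (ones R n)^T)).
Proof.
case: n hn d hd hmono hd1 => [//|n] hn d hd hmono hd1 x.
pose e i := (d (inord i))^-1.
have e_noninc i : (i.+1 < n.+1)%N -> e i.+1 <= e i.
  by move=> lt_in; rewrite lef_pV2 ?posrE // hmono // !inordK // ltnW.
have e0_le : e 0%N <= rho^-1.
  have inord0 : inord 0 = Ordinal hn by apply: val_inj; rewrite /= inordK.
  by rewrite /e inord0 lef_pV2 ?posrE // ltW.
rewrite mulmxBr mulmxBl -scalemxAr -scalemxAl mxE qform_Wmx mxE mxE qform_ones.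
rewrite subr_le0 (le_trans (min_kernel_qform_le _ e_noninc 0)) //.
have -> : \sum_(0 <= i < n.+1) x (inord i) 0 = \sum_i x i 0.
  by rewrite big_mkord; apply: eq_bigr => i _; rewrite inord_val.
by rewrite ler_wpM2r ?sqr_ge0.
Qed.
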